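(* Let $\beta>0$, $\lambda_p,\lambda_k\in\mathbb R$, and let $s_1,\dots,s_n\in\{\pm1\}$ be a nonconstant sign pattern, $S_\pm=\{i:s_i=\pm1\}$, $n_\pm=|S_\pm|$. Let $K^*_{ij}=a_+$ for $i,j\in S_+$, $b_+$ for $i\in S_+,j\in S_-$, $b_-$ for $i\in S_-,j\in S_+$, $a_-$ for $i,j\in S_-$, where \[ a_+=\frac{e^{\beta\lambda_p}}{n_+e^{\beta\lambda_p}+n_-e^{-\beta\lambda_p}},\ b_+=\frac{e^{-\beta\lambda_p}}{n_+e^{\beta\lambda_p}+n_-e^{-\beta\lambda_p}},\ a_-=\frac{e^{\beta\lambda_p}}{n_-e^{\beta\lambda_p}+n_+e^{-\beta\lambda_p}},\ b_-=\frac{e^{-\beta\lambda_p}}{n_-e^{\beta\lambda_p}+n_+e^{-\beta\lambda_p}}, \] let $\gamma_+=\lambda_p(n_+a_+-n_-b_+)$, $\gamma_-=\lambda_p(n_-a_--n_+b_-)$, $\gamma_i=\gamma_\pm$ for $i\in S_\pm$, and define $L_k:\mathbb R^n\to\mathbb R^n$ by $(L_kz)_i=-\gamma_iz_i+\lambda_k\sum_{j=1}^nK^*_{ij}z_j$. Let $V_\pm=\{z: z_i=0\text{ for }i\in S_\mp,\ \sum_{i\in S_\pm}z_i=0\}$ and $V_{\mathrm{mean}}=\{z: z\text{ constant on }S_+\text{ and on }S_-\}$. Then: on $V_+$ the only eigenvalue of $L_k$ is $-\gamma_+$, with multiplicity $n_+-1$; on $V_-$ the only eigenvalue is $-\gamma_-$,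 with multiplicity $n_--1$; and on $V_{\mathrm{mean}}$ the eigenvalues of $L_k$ are exactly those of \[ B_k=\begin{pmatrix}\lambda_kn_+a_+-\gamma_+ & \lambda_kn_-b_+\\ \lambda_kn_+b_- & \lambda_kn_-a_--\gamma_-\end{pmatrix}. \]
   Context: $L_k$ is the modewise (transverse direction $e_k$, $k\ne p$) linearization of the symmetric self-attention dynamics at the sign-split pure-mode equilibrium $x_i^*=s_ie_p$, where $\lambda_p,\lambda_k$ are eigenvalues of the symmetric interaction matrix. The subspaces $V_+,V_-,V_{\mathrm{mean}}$ are $L_k$-invariant and $\mathbb R^n=V_+\oplus V_-\oplus V_{\mathrm{mean}}$. *)

From HB Require Import structures.
From mathcomp Require Import all_boot all_order all_algebra.
From mathcomp Require Import reals.
From mathcomp Require Import sequences exp.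
Set Implicit Arguments. Unset Strict Implicit. Unset Printing Implicit Defensive.
Import Order.TTheory GRing.Theory Num.Theory.
Local Open Scope ring_scope.

Section Defs.
Variables (R : realType) (beta lp lk : R) (n : nat) (s : 'I_n -> bool).
(* sign pattern: s i = true  <->  s_i = +1 ;  s i = false <-> s_i = -1 *)

Definition npos : nat := #|[pred i | s i]|.
Definition nneg : nat := #|[pred i | ~~ s i]|.

Definition Dp : R := npos%:R * expR (beta * lp) + nneg%:R * expR (- (beta * lp)).
Definition Dm : R := nneg%:R * expR (beta * lp) + npos%:R * expR (- (beta * lp)).
Definition ap : R := expR (beta * lp) / Dp.
Definition bp : R := expR (- (beta * lp)) / Dp.
Definition am : R := expR (beta * lp) / Dm.
Definition bm : R := expR (- (beta * lp)) / Dm.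

Definition gp : R := lp * (npos%:R * ap - nneg%:R * bp).
Definition gm : R := lp * (nneg%:R * am - npos%:R * bm).
Definition gam (i : 'I_n) : R := if s i then gp else gm.

Definition Kstar : 'M[R]_n :=
  \matrix_(i, j) if s i then (if s j then ap else bp)
                 else (if s j then bm else am).

Definition Lk : 'M[R]_n :=
  \matrix_(i, j) ((if i == j then - gam i else 0) + lk * Kstar i j).

Definition inVplus (z : 'cV[R]_n) : Prop :=
  (forall i, ~~ s i -> z i 0 = 0) /\ \sum_(i | s i) z i 0 = 0.
Definition inVminus (z : 'cV[R]_n) : Prop :=
  (forall i, s i -> z i 0 = 0) /\ \sum_(i | ~~ s i) z i 0 = 0.
Definition inVmean (z : 'cV[R]_n) : Prop :=
  exists c d : R, forall i, z i 0 = if s i then c else d.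

Definition Bk : 'M[R]_2 :=
  \matrix_(i, j)
    if i == 0 then
      (if j == 0 then lk * npos%:R * ap - gp else lk * nneg%:R * bp)
    else
      (if j == 0 then lk * npos%:R * bm else lk * nneg%:R * am - gm).
End Defs.

Definition is_basis_of (R : realType) (n r : nat) (V : 'cV[R]_n -> Prop)
  (C : 'M[R]_(n, r)) : Prop :=
  \rank C = r /\ (forall z : 'cV[R]_n, V z <-> exists y : 'cV[R]_r, z = C *m y).

(* The kernel K* applied to z only sees the two block sums of z.  On V+ and
   V- the relevant block sum vanishes and the other block is zero, so L_k acts
   there as the scalar -gamma_+ (resp. -gamma_-); these spaces are the
   sum-zero hyperplanes of the coordinate blocks, of dimensions n_+ - 1 and
   n_- - 1.  On V_mean the two block indicator vectors form a basis in which
   L_k has matrix B_k, and the matrices representing L_k in two bases of the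
   same invariant subspace are similar, so they share their characteristic
   polynomial. *)

From HB Require Import structures.
From mathcomp Require Import all_boot all_order all_algebra.
From mathcomp Require Import reals.
From mathcomp Require Import sequences exp.
From mathcomp Require Import ring.
Import Order.TTheory GRing.Theory Num.Theory.
Local Open Scope ring_scope.
Set Implicit Arguments. Unset Strict Implicit. Unset Printing Implicit Defensive.

Section ColumnSpan.
Variables (F : fieldType) (n : nat).

Definition spans r (V : 'cV[F]_n -> Prop) (C : 'M[F]_(n, r)) : Prop :=
  forall z, V z <-> exists y, z = C *m y.

Lemma spans_col V r (C : 'M_(n, r)) j : spans V C -> V (col j C).
Proof. by move=> HC; apply/HC; exists (delta_mx j 0); rewrite colE. Qed.

Lemma spans_factor V r m (C : 'M_(n, r)) (D : 'M_(n, m)) :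
  spans V C -> spans V D -> exists P, C = D *m P.
Proof.
move=> HC HD.
have /fin_all_exists[y Dy] : forall j, exists y : 'cV_m, col j C = D *m y.
  by move=> j; apply/HD/(spans_col j HC).
exists (\matrix_(k, j) y j k 0); apply/matrixP => i j.
have := congr1 (fun z : 'cV_n => z i 0) (Dy j); rewrite !mxE => ->.
by apply: eq_bigr => k _; rewrite mxE.
Qed.

Lemma spans_mxrank V r m (C : 'M_(n, r)) (D : 'M_(n, m)) :
  spans V C -> spans V D -> \rank C = \rank D.
Proof.
move=> HC HD; apply/eqP; rewrite eqn_leq.
have [P CP] := spans_factor HC HD; have [Y DY] := spans_factor HD HC.
by rewrite {1}CP {3}DY !mxrankM_maxl.
Qed.

Lemma spans_scalar V r (C : 'M_(n, r)) (L : 'M_n) (a : F) :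
  (forall z, V z -> L *m z = a *: z) -> spans V C -> L *m C = C *m a%:M.
Proof.
move=> La HC; apply/matrixP => i j; rewrite mul_mx_scalar.
have := congr1 (fun z : 'cV_n => z i 0) (La _ (spans_col j HC)); rewrite !mxE => <-.
by apply: eq_bigr => k _; rewrite mxE.
Qed.

Lemma char_poly_conj m (Y B P : 'M[F]_m) :
  Y *m P = 1%:M -> char_poly (Y *m B *m P) = char_poly B.
Proof.
move=> YP.
have YPX : map_mx polyC Y *m map_mx polyC P = 1%:M.
  by rewrite -map_mxM YP map_scalar_mx.
rewrite /char_poly /char_poly_mx.
have -> : 'X%:M - map_mx polyC (Y *m B *m P) =
  map_mx polyC Y *m ('X%:M - map_mx polyC B) *m map_mx polyC P.
  rewrite !map_mxM mulmxBr mulmxBl; congr (_ - _).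
  by rewrite scalar_mxC -mulmxA YPX mulmx1.
by rewrite !det_mulmx mulrC mulrA -det_mulmx (mulmx1C YPX) det1 mul1r.
Qed.

Lemma char_poly_scalar m (a : F) : char_poly (a%:M : 'M_m) = ('X - a%:P) ^+ m.
Proof.
rewrite char_poly_trig ?scalar_mx_is_trig //.
under eq_bigr => i _ do rewrite mxE eqxx mulr1n.
by rewrite prodr_const card_ord.
Qed.

Lemma spans_conj V r m (C : 'M_(n, r)) (D : 'M_(n, m)) (L : 'M_n) B :
  \rank C = r -> \rank D = m -> spans V C -> spans V D -> L *m D = D *m B ->
  exists M, L *m C = C *m M /\ char_poly M = char_poly B.
Proof.
move=> rC rD HC HD LD.
have rm : r = m by rewrite -rC -rD (spans_mxrank HC HD).
subst r.
have [P CP] := spans_factor HC HD; have [Y DY] := spans_factor HD HC.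
have [X XC] : exists X, X *m C = 1%:M by apply/row_fullP; rewrite /row_full rC.
have YP : Y *m P = 1%:M by rewrite -XC CP DY !mulmxA XC mul1mx.
exists (Y *m B *m P); split; last exact: char_poly_conj.
by rewrite {1}CP mulmxA LD DY !mulmxA.
Qed.

End ColumnSpan.

Section ZeroSumOn.
Variables (F : fieldType) (n : nat) (P : pred 'I_n).

Definition zero_sum_on (z : 'cV[F]_n) : Prop :=
  (forall i, ~~ P i -> z i 0 = 0) /\ \sum_(i | P i) z i 0 = 0.

(* [Q] selects the coordinates in [P]; [zero_sum_on] is the image under [Q^T]
   of the hyperplane [kermx ones], whence its dimension [#|P| - 1]. *)
Let Q : 'M[F]_(#|P|, n) := \matrix_(k, i) (i == enum_val k)%:R.

Let sum_enum_val (f : 'I_n -> F) :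
  \sum_(k < #|P|) f (enum_val k) = \sum_(i | P i) f i.
Proof. by rewrite -(big_enum_val (A := P) f). Qed.

Let Q_mul (z : 'cV_n) k : (Q *m z) k 0 = z (enum_val k) 0.
Proof.
rewrite mxE (bigD1 (enum_val k)) //= mxE eqxx mul1r big1 ?addr0 // => i /negbTE.
by rewrite mxE => ->; rewrite mul0r.
Qed.

Let trQ_mul_enum_val (x : 'cV_#|P|) k : (Q^T *m x) (enum_val k) 0 = x k 0.
Proof.
rewrite mxE (bigD1 k) //= !mxE eqxx mul1r big1 ?addr0 // => l /negbTE.
by rewrite !mxE (inj_eq enum_val_inj) eq_sym => ->; rewrite mul0r.
Qed.

Let trQ_mul_out (x : 'cV_#|P|) i : ~~ P i -> (Q^T *m x) i 0 = 0.
Proof.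
move=> Pi; rewrite mxE big1 // => k _; rewrite !mxE.
suff /negbTE-> : i != enum_val k by rewrite mul0r.
by apply: contraNneq Pi => ->; apply: enum_valP.
Qed.

Let trQQ (z : 'cV_n) : (forall i, ~~ P i -> z i 0 = 0) -> Q^T *m (Q *m z) = z.
Proof.
move=> z0; apply/matrixP => i j; rewrite (ord1 j).
have [Pi | nPi] := boolP (P i); last by rewrite trQ_mul_out ?z0.
by rewrite -(enum_rankK_in Pi Pi) trQ_mul_enum_val Q_mul.
Qed.

Let Q_row_free : row_free Q.
Proof.
apply/row_freeP; exists Q^T; apply/matrixP => k l.
rewrite !mxE (bigD1 (enum_val k)) //= big1 => [|i /negbTE ne]; last first.
  by rewrite !mxE ne mul0r.
by rewrite !mxE eqxx mul1r addr0 (inj_eq enum_val_inj) eq_sym.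
Qed.

Let ones : 'cV[F]_#|P| := const_mx 1.

Let spans_kermx_ones : spans zero_sum_on (kermx ones *m Q)^T.
Proof.
move=> z; split=> [[z0 zs] | [y ->]].
  have /submxP[u Ku] : ((Q *m z)^T <= kermx ones)%MS.
    apply/sub_kermxP/matrixP => i j; rewrite !(ord1 i) !(ord1 j) [RHS]mxE -zs.
    rewrite -sum_enum_val mxE; apply: eq_bigr => k _.
    by rewrite mxE [ones _ _]mxE mulr1 Q_mul.
  by exists u^T; rewrite -{1}(trQQ z0) -(trmxK (Q *m z)) Ku !trmx_mul !mulmxA.
rewrite trmx_mul -mulmxA; split=> [i | ]; first exact: trQ_mul_out.
rewrite -sum_enum_val; under eq_bigr => k _ do rewrite trQ_mul_enum_val.
have K0 : ones^T *m ((kermx ones)^T *m y) = 0.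
  by rewrite mulmxA -trmx_mul mulmx_ker trmx0 mul0mx.
transitivity ((ones^T *m ((kermx ones)^T *m y)) 0 0); last by rewrite K0 mxE.
by rewrite [RHS]mxE; apply: eq_bigr => k _; rewrite !mxE mul1r.
Qed.

Lemma zero_sum_on_dim r (C : 'M_(n, r)) :
  (0 < #|P|)%N -> \rank C = r -> spans zero_sum_on C -> r = #|P|.-1.
Proof.
move=> /card_gt0P[i0 Pi0] rC HC.
have rank_ones : \rank ones = 1%N.
  apply/eqP; rewrite eqn_leq rank_leq_col lt0n mxrank_eq0 /=.
  apply/eqP => /matrixP /(_ (enum_rank_in Pi0 i0) 0).
  by rewrite !mxE; apply/eqP; rewrite oner_eq0.
rewrite -rC (spans_mxrank HC spans_kermx_ones) mxrank_tr mxrankMfree //.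
by rewrite mxrank_ker rank_ones subn1.
Qed.

End ZeroSumOn.

Section Linearization.
Variables (R : realType) (beta lp lk : R) (n : nat) (s : 'I_n -> bool).

Local Notation L := (Lk beta lp lk s).

Lemma Lk_mul m (z : 'M_(n, m)) i k :
  (L *m z) i k = - gam beta lp s i * z i k +
    lk * ((if s i then ap beta lp s else bm beta lp s) * \sum_(j | s j) z j k +
          (if s i then bp beta lp s else am beta lp s) * \sum_(j | ~~ s j) z j k).
Proof.
rewrite mxE; under eq_bigr => j _ do rewrite mxE mulrDl.
rewrite big_split /= (bigD1 i) //= eqxx big1 => [|j]; last first.
  by rewrite eq_sym => /negbTE->; rewrite mul0r.
rewrite addr0 (bigID s) /= !mulrDr !mulr_sumr.
by congr (_ + (_ + _)); apply: eq_bigr => j sj; rewrite mxE ?(negbTE sj) ?sj mulrA.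
Qed.

Lemma Lk_Vplus z : inVplus s z -> L *m z = (- gp beta lp s) *: z.
Proof.
move=> [z0 zs]; apply/matrixP => i j; rewrite (ord1 j) Lk_mul zs mulr0 add0r.
rewrite big1 ?mulr0 ?addr0 // [RHS]mxE /gam.
by case: (boolP (s i)) => si //; rewrite z0 ?mulr0.
Qed.

Lemma Lk_Vminus z : inVminus s z -> L *m z = (- gm beta lp s) *: z.
Proof.
move=> [z0 zs]; apply/matrixP => i j; rewrite (ord1 j) Lk_mul zs mulr0 addr0.
rewrite big1 ?mulr0 ?addr0 // [RHS]mxE /gam.
by case: (boolP (s i)) => si //; rewrite z0 ?mulr0.
Qed.

Lemma inVminusE (z : 'cV[R]_n) : inVminus s z <-> zero_sum_on [pred i | ~~ s i] z.
Proof.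
split=> [] [z0 zs]; split=> // i; first by rewrite negbK; apply: z0.
by move=> si; apply: z0; rewrite /= si.
Qed.

Definition sign_indicator_mx : 'M[R]_(n, 2) :=
  \matrix_(i, j) (if j == 0 then (s i)%:R else (~~ s i)%:R).

Let ord2 (a : 'I_2) : a = 0 \/ a = 1.
Proof. by case: a => [[|[|//]]] ?; [left | right]; apply: val_inj. Qed.

Let sum_ord2 (f : 'I_2 -> R) : \sum_j f j = f 0 + f 1.
Proof. by rewrite big_ord_recl big_ord1; congr (f _ + f _); apply: val_inj. Qed.

Lemma spans_Vmean : spans (inVmean s) sign_indicator_mx.
Proof.
move=> z; split=> [[c [d zcd]] | [y ->]].
  exists (\col_j (if j == 0 then c else d)); apply/matrixP => i j.
  by rewrite (ord1 j) mxE sum_ord2 !mxE zcd /=; case: (s i); rewrite /=; ring.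
exists (y 0 0), (y 1 0) => i; rewrite mxE sum_ord2 !mxE /=.
by case: (s i); rewrite /=; ring.
Qed.

Lemma rank_sign_indicator_mx i j :
  s i -> ~~ s j -> \rank sign_indicator_mx = 2.
Proof.
move=> si sj; apply/eqP; rewrite -/(row_full _); apply/row_fullP.
exists (\matrix_(k, l) (if k == 0 then (l == i)%:R else (l == j)%:R)).
have sum_delta (f : 'I_n -> R) l : \sum_k (k == l)%:R * f k = f l.
  rewrite (bigD1 l) //= eqxx mul1r big1 ?addr0 // => k /negbTE->.
  by rewrite mul0r.
apply/matrixP => a b; rewrite !mxE; under eq_bigr => k _ do rewrite !mxE.
by case: (ord2 a) => ->; case: (ord2 b) => ->; rewrite sum_delta /= ?si ?(negbTE sj).
Qed.

Lemma Lk_sign_indicator_mx :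
  L *m sign_indicator_mx = sign_indicator_mx *m Bk beta lp lk s.
Proof.
apply/matrixP => i b; rewrite Lk_mul [RHS]mxE sum_ord2 !mxE.
have sum_pos : \sum_(l | s l) sign_indicator_mx l b =
               if b == 0 then (npos s)%:R else 0.
  under eq_bigr => l sl do rewrite mxE sl.
  by case: (b == 0); rewrite sumr_const ?mul0rn //; congr (_ *+ _); apply: eq_card.
have sum_neg : \sum_(l | ~~ s l) sign_indicator_mx l b =
               if b == 0 then 0 else (nneg s)%:R.
  under eq_bigr => l /negbTE sl do rewrite mxE sl.
  by case: (b == 0); rewrite sumr_const ?mul0rn //; congr (_ *+ _); apply: eq_card.
rewrite sum_pos sum_neg /gam (_ : (1 == 0 :> 'I_2) = false) //.
by case: (b == 0); case: (s i) => /=; ring.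
Qed.

End Linearization.

Theorem propositionA3 (R : realType) (beta lp lk : R) (n : nat)
  (s : 'I_n -> bool) :
  0 < beta ->
  (exists i j, s i /\ ~~ s j) ->
  (forall (r : nat) (C : 'M[R]_(n, r)),
     is_basis_of (inVplus s) C ->
     exists M : 'M[R]_r, Lk beta lp lk s *m C = C *m M /\
       char_poly M = ('X + (gp beta lp s)%:P) ^+ (npos s).-1) /\
  (forall (r : nat) (C : 'M[R]_(n, r)),
     is_basis_of (inVminus s) C ->
     exists M : 'M[R]_r, Lk beta lp lk s *m C = C *m M /\
       char_poly M = ('X + (gm beta lp s)%:P) ^+ (nneg s).-1) /\
  (forall (r : nat) (C : 'M[R]_(n, r)),
     is_basis_of (inVmean s) C ->
     exists M : 'M[R]_r, Lk beta lp lk s *m C = C *m M /\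
       char_poly M = char_poly (Bk beta lp lk s)).
Proof.
move=> _ [i [j [si sj]]]; split; [|split] => r C [rC HC].
- have dim_r : r = (npos s).-1.
    by apply: (zero_sum_on_dim (P := [pred i | s i])) rC HC; apply/card_gt0P; exists i.
  exists (- gp beta lp s)%:M; split; first by apply: spans_scalar HC => z; apply: Lk_Vplus.
  by rewrite char_poly_scalar dim_r polyCN opprK.
- have HC' : spans (zero_sum_on [pred i | ~~ s i]) C.
    by move=> z; rewrite -inVminusE; apply: HC.
  have dim_r : r = (nneg s).-1.
    by apply: zero_sum_on_dim rC HC'; apply/card_gt0P; exists j.
  exists (- gm beta lp s)%:M; split; first by apply: spans_scalar HC => z; apply: Lk_Vminus.
  by rewrite char_poly_scalar dim_r polyCN opprK.
- exact: spans_conj rC (rank_sign_indicator_mx R si sj) HC (spans_Vmean s)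
    (Lk_sign_indicator_mx beta lp lk s).
Qed.
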